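(* Let $\Phi$ be a Young function, $Q\subset\mathbb{R}^N$ bounded open and $\{T(x)\}$ an $N$-dimensional dynamical system on $(\Omega,\mathscr{M},\mu)$. Then every $f\in\mathcal{C}(\overline{Q},L^\infty(\Omega))$ is admissible.
   Context: Young function: $\Phi:[0,\infty)\to[0,\infty)$ continuous, convex, $\Phi(t)>0$ for $t>0$, $\Phi(t)/t\to0$ at $0$, $\to\infty$ at $\infty$. $N$-dimensional dynamical system: invertible bimeasurable maps $T(x)$ of the probability space $(\Omega,\mathscr{M},\mu)$, $T(0)=\mathrm{id}$, $T(x_1+x_2)=T(x_1)\circ T(x_2)$, $\mu$-preserving, jointly measurable in $(x,\omega)$. $\mathcal{C}(\overline{Q},L^\infty(\Omega))$ is the space of continuous maps $\overline Q\to L^\infty(\Omega)$. An element $f\in L^\Phi(Q\times\Omega)$ is admissible if $f_T:(x,\omega)\mapsto f(x,T(x)\omega)$ defines an element of $L^\Phi(Q\times\Omega)$. *)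

From HB Require Import structures.
From mathcomp Require Import all_boot all_order all_algebra.
From mathcomp Require Import all_classical all_reals all_analysis.
From mathcomp Require Import ess_sup_inf.
Set Implicit Arguments. Unset Strict Implicit. Unset Printing Implicit Defensive.
Import Order.TTheory GRing.Theory Num.Theory.
Import numFieldNormedType.Exports.
Local Open Scope classical_set_scope.
Local Open Scope ring_scope.

Section lebN.
Context {R : realType}.
Local Open Scope ereal_scope.

Definition tcons n (p : n.-tuple R * R) : n.+1.-tuple R := [tuple of p.2 :: p.1].

Lemma measurable_tcons n : measurable_fun [set: n.-tuple R * R] (@tcons n).
Proof. exact: measurable_cons. Qed.

Variables (n : nat) (m : {measure set (n.-tuple R) -> \bar R}).

Definition lebS : set (n.+1.-tuple R) -> \bar R :=
  pushforward (m \x (@lebesgue_measure R)) (@tcons n).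

Let lebS0 : lebS set0 = 0.
Proof. by rewrite /lebS /pushforward preimage_set0 measure0. Qed.

Let lebS_ge0 A : 0 <= lebS A.
Proof. rewrite /lebS /pushforward; exact: (measure_ge0 (m \x (@lebesgue_measure R))). Qed.

Let lebS_sigma_additive : semi_sigma_additive lebS.
Proof.
move=> F mF tF mUF; rewrite /lebS /pushforward preimage_bigcup.
apply: measure_semi_sigma_additive.
- by move=> k; rewrite -[X in measurable X]setTI; exact: measurable_tcons.
- apply/trivIsetP => /= i j _ _ ij; rewrite -preimage_setI.
  by move/trivIsetP : tF => /(_ _ _ _ _ ij) ->//; rewrite preimage_set0.
- by rewrite -preimage_bigcup -[X in measurable X]setTI; exact: measurable_tcons.
Qed.

HB.instance Definition _ := isMeasure.Build _ _ _ lebS lebS0 lebS_ge0 lebS_sigma_additive.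
End lebN.

Fixpoint lebN {R : realType} (n : nat) : {measure set (n.-tuple R) -> \bar R} :=
  match n with
  | 0 => \d_ [tuple]
  | k.+1 => lebS (lebN k)
  end.

Section geometry.
Context {R : realType} {n : nat}.
Implicit Types (x y : n.-tuple R) (Q : set (n.-tuple R)).

Definition tdist x y : R := \big[Num.max/0]_(i < n) `|tnth x i - tnth y i|.
Definition tadd x y : n.-tuple R := [tuple tnth x i + tnth y i | i < n].
Definition tzero : n.-tuple R := [tuple 0 | i < n].

Definition topen Q :=
  forall x, Q x -> exists2 e : R, 0 < e & forall y, tdist x y < e -> Q y.
Definition tbounded Q :=
  exists M : R, forall x, Q x -> forall i, `|tnth x i| <= M.
Definition tclosure Q : set (n.-tuple R) :=
  [set x | forall e : R, 0 < e -> exists2 y, Q y & tdist x y < e].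
End geometry.

Definition young {R : realType} (Phi : R -> R) : Prop :=
  {within `[0%R, +oo[, continuous Phi} /\
  (forall s t a : R, 0 <= s -> 0 <= t -> 0 <= a <= 1 ->
     Phi (a * s + (1 - a) * t) <= a * Phi s + (1 - a) * Phi t) /\
  (forall t : R, 0 <= t -> 0 <= Phi t) /\
  (forall t : R, 0 < t -> 0 < Phi t) /\
  (Phi t / t @[t --> 0^'+] --> 0) /\
  (Phi t / t @[t --> +oo] --> +oo).

Definition dynamical_system {R : realType} {d} {Omega : measurableType d} {N : nat}
  (mu : {measure set Omega -> \bar R}) (T : N.-tuple R -> Omega -> Omega) : Prop :=
  (forall x, measurable_fun [set: Omega] (T x) /\
     exists Tinv : Omega -> Omega,
       [/\ cancel (T x) Tinv, cancel Tinv (T x) & measurable_fun [set: Omega] Tinv]) /\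
  (forall w, T tzero w = w) /\
  (forall x1 x2 w, T (tadd x1 x2) w = T x1 (T x2 w)) /\
  (forall x A, measurable A -> mu (T x @^-1` A) = mu A) /\
  measurable_fun [set: N.-tuple R * Omega] (fun p => T p.1 p.2).

Section Linfty.
Context {R : realType} {d} {Omega : measurableType d}.
Variable mu : {measure set Omega -> \bar R}.

Definition Linfty_elt (g : Omega -> R) : Prop :=
  measurable_fun [set: Omega] g /\ (ess_sup mu (fun w => (`|g w|)%:E) < +oo)%E.

Definition Linfty_dist (g h : Omega -> R) : \bar R :=
  ess_sup mu (fun w => (`|g w - h w|)%:E).

Definition C_closure_Linfty {N : nat} (Q : set (N.-tuple R))
    (f : N.-tuple R -> Omega -> R) : Prop :=
  (forall x, tclosure Q x -> Linfty_elt (f x)) /\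
  (forall x, tclosure Q x -> forall e : R, 0 < e ->
     exists2 delta : R, 0 < delta &
       forall y, tclosure Q y -> tdist x y < delta ->
         (Linfty_dist (f y) (f x) <= e%:E)%E).
End Linfty.

Definition in_Orlicz {R : realType} {d} {X : measurableType d} (Phi : R -> R)
    (m : {measure set X -> \bar R}) (D : set X) (g : X -> R) : Prop :=
  measurable_fun D g /\
  exists2 l : R, 0 < l & (\int[m]_(z in D) (Phi (`|g z| / l))%:E < +oo)%E.

Definition admissible {R : realType} {d} {Omega : measurableType d} {N : nat}
    (Phi : R -> R) (mu : probability Omega R) (Q : set (N.-tuple R))
    (T : N.-tuple R -> Omega -> Omega) (f : N.-tuple R -> Omega -> R) : Prop :=
  exists g : N.-tuple R * Omega -> R,
    in_Orlicz Phi ((lebN N) \x mu)%E (Q `*` [set: Omega]) g /\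
    (\forall x \ae lebN N, Q x -> \forall w \ae mu, g (x, w) = f x (T x w)).

From HB Require Import structures.
From mathcomp Require Import all_boot all_order all_algebra.
From mathcomp Require Import all_classical all_reals all_analysis.
From mathcomp Require Import ess_sup_inf.
From mathcomp Require Import lra.
From mathcomp Require Import measurable_realfun.
Set Implicit Arguments. Unset Strict Implicit. Unset Printing Implicit Defensive.
Import Order.TTheory GRing.Theory Num.Theory.
Import numFieldNormedType.Exports.
Local Open Scope classical_set_scope.
Local Open Scope ring_scope.

(* Enumerate the rational points of Q and let p_k(x) be the first
   one within 1/(k+1) of x; the functions g_k(x,w) := f(p_k(x), T(x)w) are
   jointly measurable, since p_k is a countably-valued measurable map and
   (x,w) |-> T(x)w is measurable.  Continuity of f in L^oo(Omega) and the
   invariance of mu under T(x) give g_k(x,.) --> f(x, T(x).) mu-a.e. for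
   every x in Q, so the limsup g of the g_k is a measurable version of f_T.
   By compactness of the closure of Q, f is bounded in L^oo by some C, so g
   may be truncated at level C; then Phi(|g|) <= max(Phi 0, Phi C) by
   convexity, which is integrable over the finite-measure set Q x Omega. *)

Section tdist.
Context {R : realType} {n : nat}.
Implicit Types (x y z : n.-tuple R) (Q : set (n.-tuple R)).

Lemma tdist_ge0 x y : 0 <= tdist x y.
Proof. by rewrite /tdist; elim/big_ind: _ => // a b ? ?; rewrite le_max; apply/orP; left. Qed.

Lemma ler_tdist x y i : `|tnth x i - tnth y i| <= tdist x y.
Proof. exact: (le_bigmax _ (fun i => `|tnth x i - tnth y i|) i). Qed.

Lemma tdist_lt x y e : 0 < e -> (forall i, `|tnth x i - tnth y i| < e) -> tdist x y < e.
Proof. by move=> e0 H; apply: bigmax_lt. Qed.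

Lemma tdist_le x y e : 0 <= e -> (forall i, `|tnth x i - tnth y i| <= e) -> tdist x y <= e.
Proof. by move=> e0 H; apply: bigmax_le. Qed.

Lemma tdistC x y : tdist x y = tdist y x.
Proof. by apply: eq_bigr => i _; rewrite distrC. Qed.

Lemma tdistxx x : tdist x x = 0.
Proof.
apply/eqP; rewrite eq_le tdist_ge0 andbT; apply: tdist_le => // i.
by rewrite subrr normr0.
Qed.

Lemma tdist_triangle x y z : tdist x z <= tdist x y + tdist y z.
Proof.
apply: tdist_le; first by rewrite addr_ge0 // tdist_ge0.
move=> i; apply: (le_trans (y := `|tnth x i - tnth y i| + `|tnth y i - tnth z i|)).
  by rewrite (le_trans _ (ler_normD _ _)) // addrA subrK.
by apply: lerD; apply: ler_tdist.
Qed.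

Lemma normr_le_tdist0 x i : `|tnth x i| <= tdist x tzero.
Proof. by have := ler_tdist x tzero i; rewrite /tzero tnth_mktuple subr0. Qed.

Lemma measurable_tdist c : measurable_fun [set: n.-tuple R] (fun y => tdist y c).
Proof.
rewrite /tdist; elim: (index_enum _) => [|i s IH].
  by under eq_fun do rewrite big_nil; exact: measurable_cst.
under eq_fun do rewrite big_cons.
apply: measurable_maxr => //; apply: measurableT_comp => //.
by apply: measurable_funB => //; exact: measurable_tnth.
Qed.

Lemma measurable_tball c r : measurable [set y : n.-tuple R | tdist y c < r].
Proof.
have := measurable_tdist c measurableT (measurable_itv `]-oo, r[).
by rewrite setTI; congr measurable; apply/seteqP; split => y /=; rewrite in_itv.
Qed.

Lemma sub_tclosure Q : Q `<=` tclosure Q.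
Proof. by move=> x Qx e e0; exists x => //; rewrite tdistxx. Qed.

End tdist.

Section rational_points.
Context {R : realType} {n : nat}.
Implicit Types (x : n.-tuple R) (Q : set (n.-tuple R)).

Definition ratr_tuple (t : n.-tuple rat) : n.-tuple R := [tuple ratr (tnth t i) | i < n].

Lemma ratr_tuple_dense x e : 0 < e -> exists t, tdist x (ratr_tuple t) < e.
Proof.
move=> e0.
have /choice[q Hq] : forall i : 'I_n, exists q : rat, `|tnth x i - ratr q| < e.
  move=> i; have [q] : exists q : rat, ratr q \in `]tnth x i - e, tnth x i + e[.
    by apply: rat_in_itvoo; rewrite ltrD2l gtrN.
  rewrite in_itv /= => /andP[h1 h2]; exists q.
  by rewrite ltr_norml; apply/andP; split; lra.
exists [tuple q i | i < n]; apply: tdist_lt => // i.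
by rewrite !tnth_mktuple; apply: Hq.
Qed.

Lemma topen_ratr_tuple_dense Q x e : topen Q -> Q x -> 0 < e ->
  exists t, Q (ratr_tuple t) /\ tdist x (ratr_tuple t) < e.
Proof.
move=> oQ Qx e0; have [e1 e10 He1] := oQ x Qx.
have [t Ht] := ratr_tuple_dense x (ltac:(by rewrite lt_min e0 e10) : 0 < Num.min e e1).
exists t; split; last by apply: (lt_le_trans Ht); rewrite ge_min lexx.
by apply: He1; apply: (lt_le_trans Ht); rewrite ge_min lexx orbT.
Qed.

(* An open set is the countable union of the rational balls it contains. *)
Lemma topen_measurable Q : topen Q -> measurable Q.
Proof.
move=> oQ.
pose S (p : n.-tuple rat * rat) := [set y | tdist y (ratr_tuple p.1) < ratr p.2 /\
   (forall z, tdist z (ratr_tuple p.1) < ratr p.2 -> Q z)].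
have -> : Q = \bigcup_p S p.
  apply/seteqP; split => [x Qx|y [p _ [H1 H2]]]; last exact: H2 _ H1.
  have [e e0 He] := oQ x Qx.
  have [r] := rat_in_itvoo (divr_gt0 e0 (ltr0Sn R 1)).
  rewrite in_itv /= => /andP[r0 re].
  have [t Ht] := ratr_tuple_dense x r0.
  exists (t, r) => //; split => //= z Hz; apply: He.
  apply: (le_lt_trans (tdist_triangle x (ratr_tuple t) z)).
  by rewrite tdistC in Hz; apply: (lt_le_trans (ltrD Ht Hz)); lra.
apply: (countable_bigcupT_measurable (countableP _)) => p.
have [H|H] := pselect (forall z, tdist z (ratr_tuple p.1) < ratr p.2 -> Q z).
  rewrite (_ : S p = [set y | tdist y (ratr_tuple p.1) < ratr p.2]).
    exact: measurable_tball.
  by apply/seteqP; split => y /= => [[]//|]; split.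
by rewrite (_ : S p = set0) //; apply/seteqP; split => y //= [_ /H].
Qed.

End rational_points.

Section rational_approximation.
Context {R : realType} {n : nat} (Q : set (n.-tuple R)).
Hypothesis oQ : topen Q.

Definition rat_point (j : nat) : n.-tuple R :=
  if @unpickle (n.-tuple rat) j is Some t then ratr_tuple t else tzero.

Definition near_rat_point k j x := Q (rat_point j) /\ tdist x (rat_point j) < k.+1%:R^-1.

Lemma near_rat_point_ex k x : Q x -> exists j, near_rat_point k j x.
Proof.
move=> Qx; have k0 : 0 < k.+1%:R^-1 :> R by rewrite invr_gt0.
have [t [Qt Ht]] := topen_ratr_tuple_dense oQ Qx k0.
by exists (pickle t); rewrite /near_rat_point /rat_point pickleK.
Qed.

Definition rat_index k x : nat :=
  if pselect (exists j, near_rat_point k j x) is left h then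
    ex_minn (ex_intro (fun j => `[< near_rat_point k j x >]) _ (asboolT (projT2 (cid h))))
  else 0%N.

Lemma rat_indexP k x : Q x ->
  near_rat_point k (rat_index k x) x /\
  forall i, (i < rat_index k x)%N -> ~ near_rat_point k i x.
Proof.
move=> /(near_rat_point_ex k); rewrite /rat_index; case: pselect => // h _.
case: ex_minnP => m /asboolP Pm Hmin; split => // i lt Pi.
by have := Hmin i (asboolT Pi); rewrite leqNgt lt.
Qed.

Lemma measurable_near_rat_point k j : measurable [set x | near_rat_point k j x].
Proof.
have [H|H] := pselect (Q (rat_point j)).
  rewrite (_ : [set x | _] = [set y | tdist y (rat_point j) < k.+1%:R^-1]).
    exact: measurable_tball.
  by apply/seteqP; split => y /= => [[]|].
by rewrite (_ : [set x | _] = set0) //; apply/seteqP; split => y //= [].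
Qed.

Lemma measurable_rat_index_eq k j : measurable [set x | Q x /\ rat_index k x = j].
Proof.
have -> : [set x | Q x /\ rat_index k x = j] = (Q `&` [set x | near_rat_point k j x])
    `\` \bigcup_(i in [set i | (i < j)%N]) [set x | near_rat_point k i x].
  apply/seteqP; split => x /=.
    by move=> [Qx <-]; have [P1 P2] := rat_indexP k Qx; split => // -[i /= /P2].
  move=> [[Qx Pj] Hn]; split => //; have [P1 P2] := rat_indexP k Qx.
  have [lt|lt|//] := ltngtP (rat_index k x) j.
  - by exfalso; apply: Hn; exists (rat_index k x).
  - by exfalso; exact: P2 j lt Pj.
apply: measurableD; last by apply: bigcup_measurable => i _; exact: measurable_near_rat_point.
by apply: measurableI; [exact: topen_measurable|exact: measurable_near_rat_point].
Qed.

End rational_approximation.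

Section compactness.
Context {R : realType} {n : nat}.

Definition tuple_row (t : n.-tuple R) : 'rV[R]_n := \row_i tnth t i.

Lemma tuple_row_ball x y (e : R) : 0 < e -> ball (tuple_row x) e (tuple_row y) <-> tdist x y < e.
Proof.
move=> e0; rewrite mx_norm_ball /ball_ /= [X in X < _]/Num.norm /= mx_normrE; split.
  move/bigmax_ltP => [_ H]; apply: tdist_lt => // i.
  by have := H (ord0, i) isT; rewrite !mxE.
move=> H; apply/bigmax_ltP; split => // -[a i] _ /=.
by rewrite !mxE; apply: le_lt_trans H; exact: ler_tdist.
Qed.

Lemma tuple_rowK (v : 'rV[R]_n) : v = tuple_row [tuple v ord0 i | i < n].
Proof. by apply/rowP => i; rewrite mxE tnth_mktuple ord1. Qed.

Lemma compact_tclosure (Q : set (n.-tuple R)) : tbounded Q -> compact (tuple_row @` tclosure Q).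
Proof.
move=> [M0 HM0]; apply: bounded_closed_compact.
  rewrite /bounded_near /=; near=> M => v [x Cx <-].
  rewrite /= [X in X <= _]/Num.norm /= mx_normrE.
  have HM : `|M0| + 1 < M by near: M; apply: nbhs_pinfty_gt.
  apply: bigmax_le => [|[a i] _ /=]; first by apply: le_trans (ltW HM); rewrite addr_ge0.
  rewrite !mxE; apply: le_trans (ltW HM).
  have [z Qz Hz] := Cx 1 ltr01.
  have h1 := ler_tdist x z i; have h2 := HM0 z Qz i; have h3 := ler_norm M0.
  have h4 : `|tnth x i| <= `|tnth x i - tnth z i| + `|tnth z i|.
    by rewrite (le_trans _ (ler_normD _ _)) // subrK.
  lra.
move=> v Cv; rewrite (tuple_rowK v); exists [tuple v ord0 i | i < n] => // e e0.
have e20 : 0 < e / 2 by rewrite divr_gt0.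
have [_ [[y Cy <-] Hb]] := Cv _ (nbhsx_ballx v _ e20).
rewrite (tuple_rowK v) in Hb; move/(tuple_row_ball _ _ e20): Hb => Hb.
have [z Qz Hz] := Cy _ e20.
by exists z => //; apply: le_lt_trans (tdist_triangle _ y _) _; lra.
Unshelve. all: by end_near.
Qed.

End compactness.

Lemma C_closure_Linfty_bounded {R : realType} {d} {Omega : measurableType d} {n : nat}
    (mu : {measure set Omega -> \bar R}) (Q : set (n.-tuple R))
    (f : n.-tuple R -> Omega -> R) :
  tbounded Q -> C_closure_Linfty mu Q f ->
  exists C : R, 0 < C /\ forall x, tclosure Q x ->
    (ess_sup mu (fun w => (`|f x w|)%:E) <= C%:E)%E.
Proof.
move=> bQ [fL fC].
have /choice[del Hdel] : forall y, exists del : R, tclosure Q y -> 0 < del /\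
    forall y', tclosure Q y' -> tdist y y' < del ->
      (Linfty_dist mu (f y') (f y) <= 1%:E)%E.
  move=> y; have [Cy|nCy] := pselect (tclosure Q y); last by exists 1.
  by have [del d0 Hd] := fC y Cy 1 ltr01; exists del.
have := compact_tclosure bQ; rewrite compact_cover => /(_ _ (tclosure Q)
  (fun y => ball (tuple_row y) (del y))) [].
- by move=> i _; exact: ball_open.
- by move=> v [x Cx <-]; exists x => //; apply: ballxx; exact: (Hdel x Cx).1.
move=> D' D'D Hcov.
pose es y := ess_sup mu (fun w => (`|f y w|)%:E).
exists (\big[Num.max/1]_(y <- finmap.enum_fset D') (1 + `|fine (es y)|)); split.
  exact: lt_le_trans ltr01 (bigmax_ge_id _ _ _ _).
move=> x Cx.
have [y /= yD' Hb] := Hcov (tuple_row x) (ex_intro2 _ _ x Cx erefl).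
have Cy : tclosure Q y by have := D'D y yD'; rewrite inE.
have [d0 Hd] := Hdel y Cy.
have Hxy := Hd x Cx (proj1 (tuple_row_ball _ _ d0) Hb).
have Hy : (es y <= (`|fine (es y)|)%:E)%E.
  have := (fL y Cy).2; rewrite -/(es y); case: (es y) => [r _| //|_].
    by rewrite lee_fin ler_norm.
  by rewrite leNye.
apply: (@le_trans _ _ (ess_sup mu ((fun w => (`|f x w - f y w|)%:E) \+ (fun w => (`|f y w|)%:E)))).
  apply: le_ess_sup; apply: aeW => w /=; rewrite -EFinD lee_fin.
  by rewrite (le_trans _ (ler_normD _ _)) // subrK.
apply: le_trans (ess_supD _ _ _) _.
apply: (@le_trans _ _ (1 + `|fine (es y)|)%:E); first by rewrite EFinD leeD.
by rewrite lee_fin; exact: (le_bigmax_seq _ _ _ _ yD').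
Qed.

Lemma lebN_tball_lty {R : realType} n (M : R) : 0 < M ->
  (lebN n [set x : n.-tuple R | (tdist x tzero < M)%R] < +oo)%E.
Proof.
move=> M0; elim: n => [|n IH]; first by rewrite /= diracE ltry.
rewrite /= /lebS /pushforward.
set B := [set x : n.-tuple R | tdist x tzero < M].
have sub : @tcons R n @^-1` [set x | tdist x tzero < M] `<=` B `*` `](- M), M[%classic.
  move=> [t r] /= H; split.
    apply: tdist_lt => // i; rewrite /tzero tnth_mktuple subr0.
    by apply: le_lt_trans H; have := normr_le_tdist0 (tcons (t, r)) (lift ord0 i); rewrite tnthS.
  rewrite in_itv /= -ltr_norml; apply: le_lt_trans H.
  by have := normr_le_tdist0 (tcons (t, r)) ord0; rewrite tnth0.
apply: (@le_lt_trans _ _ ((lebN n \x lebesgue_measure) (B `*` `](- M)%R, M[%classic))%E).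
  apply: le_measure; rewrite ?inE; last exact: sub.
  - by rewrite -[X in measurable X]setTI; apply: measurable_tcons => //; exact: measurable_tball.
  - by apply: measurableX; [exact: measurable_tball|exact: measurable_itv].
rewrite product_measure1E; [|exact: measurable_tball|exact: measurable_itv].
apply: lte_mul_pinfty => //; first by rewrite ge0_fin_numE.
by have := lebesgue_measure_itv `](- M)%R, M%R[; rewrite /= => ->; case: ifP => _; rewrite ?ltry.
Qed.

Lemma tbounded_measure_lty {R : realType} {d} {Omega : measurableType d} {n : nat}
    (mu : probability Omega R) (Q : set (n.-tuple R)) :
  tbounded Q -> measurable Q -> ((lebN n \x mu) (Q `*` [set: Omega]) < +oo)%E.
Proof.
move=> [M0 HM0] mQ.
have M10 : 0 < `|M0| + 1 by rewrite ltr_pwDr.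
have sub : Q `*` [set: Omega] `<=` [set x | tdist x tzero < `|M0| + 1] `*` [set: Omega].
  move=> [x w] [/= Qx _]; split => //=.
  apply: (le_lt_trans (tdist_le (e := `|M0|) _ _)) => //; last by rewrite ltrDl.
  move=> i; rewrite /tzero tnth_mktuple subr0; apply: le_trans (HM0 x Qx i) _.
  exact: ler_norm.
apply: (@le_lt_trans _ _
    ((lebN n \x mu) ([set x | (tdist x tzero < `|M0| + 1)%R] `*` [set: Omega]))%E).
  apply: le_measure; rewrite ?inE; last exact: sub.
  - exact: measurableX.
  - by apply: measurableX => //; exact: measurable_tball.
rewrite product_measure1E //; last exact: measurable_tball.
apply: lte_mul_pinfty => //; last exact: le_lt_trans (probability_le1 mu measurableT) (ltry _).
by rewrite ge0_fin_numE // lebN_tball_lty.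
Qed.

Lemma young_le_max {R : realType} (Phi : R -> R) (C v : R) : young Phi ->
  0 < C -> 0 <= v <= C -> Phi v <= Num.max (Phi 0) (Phi C).
Proof.
move=> [_ [Phiconv _]] C0 /andP[v0 vC].
have a0 : 0 <= v / C by rewrite divr_ge0 // ltW.
have a1 : v / C <= 1 by rewrite ler_pdivrMr // mul1r.
have := Phiconv C 0 (v / C) (ltW C0) (lexx 0) (ltac:(by rewrite a0 a1)).
rewrite mulr0 addr0 divfK ?gt_eqF // => /le_trans; apply.
have hC : Phi C <= Num.max (Phi 0) (Phi C) by rewrite le_max lexx orbT.
have h0 : Phi 0 <= Num.max (Phi 0) (Phi C) by rewrite le_max lexx.
by move: (v / C) a0 a1 => a a0 a1; nra.
Qed.

Lemma in_Orlicz_bounded {R : realType} {d} {X : measurableType d} (Phi : R -> R)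
    (m : {measure set X -> \bar R}) (D : set X) (g : X -> R) (C : R) :
  young Phi -> measurable D -> (m D < +oo)%E -> measurable_fun D g ->
  0 < C -> (forall z, D z -> `|g z| <= C) -> in_Orlicz Phi m D g.
Proof.
move=> YPhi mD mDfin mg C0 gC; split => //; exists 1 => //.
under eq_fun do rewrite divr1.
have [Phic [_ [Phi0 _]]] := YPhi.
have mPhig : measurable_fun D (fun z => (Phi `|g z|)%:E).
  apply/measurable_EFinP; apply: (measurable_comp (measurable_itv `[0, +oo[)).
  - by move=> _ [z _ <-]; rewrite /= in_itv /= andbT normr_ge0.
  - exact: subspace_continuous_measurable_fun.
  - by apply: measurableT_comp => //; exact: normr_measurable.
set B := Num.max (Phi 0) (Phi C).
apply: (le_lt_trans (ge0_le_integral _ mD _ mPhig (measurable_cst B%:E) _)).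
- by move=> z _; rewrite lee_fin Phi0.
- by move=> z Dz; rewrite lee_fin young_le_max // normr_ge0 gC.
rewrite integral_cst // lte_mul_pinfty //.
by rewrite lee_fin le_max Phi0 ?lexx.
Qed.

Definition clamp {R : realType} (C x : R) : R := Num.min C (Num.max (- C) x).

Lemma normr_clamp_le {R : realType} (C x : R) : 0 <= C -> `|clamp C x| <= C.
Proof.
move=> C0; rewrite /clamp ler_norml; apply/andP; split; last by rewrite ge_min lexx.
by rewrite le_min le_max lexx orTb andbT; lra.
Qed.

Lemma clamp_id {R : realType} (C x : R) : `|x| <= C -> clamp C x = x.
Proof. by rewrite ler_norml => /andP[x1 x2]; rewrite /clamp max_r // min_r. Qed.

Lemma measurable_clamp_limn_esup {R : realType} {d} {X : measurableType d}
    (D : set X) (C : R) (h : (X -> R)^nat) :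
  (forall k, measurable_fun D (h k)) ->
  measurable_fun D (fun z => clamp C (fine (limn_esup (fun k => (h k z)%:E)))).
Proof.
move=> mh; apply: measurable_minr; first exact: measurable_cst.
apply: measurable_maxr; first exact: measurable_cst.
apply: (measurableT_comp (fine_measurable measurableT)).
by apply: measurable_fun_limn_esup => k; apply/measurable_EFinP.
Qed.

Lemma ae_comp_dynamical_system {R : realType} {d} {Omega : measurableType d} {n : nat}
    (mu : {measure set Omega -> \bar R}) (T : n.-tuple R -> Omega -> Omega)
    (P : Omega -> Prop) x :
  dynamical_system mu T -> (\forall v \ae mu, P v) -> \forall w \ae mu, P (T x w).
Proof.
move=> [DT1 [_ [_ [DTp _]]]] [A [mA A0 sub]]; exists (T x @^-1` A); split.
- by have := (DT1 x).1 measurableT A mA; rewrite setTI.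
- by rewrite DTp.
- by move=> w /= nP; apply: sub.
Qed.

Section approximants.
Context {R : realType} {d} {Omega : measurableType d} {n : nat}.
Context (mu : probability Omega R) (Q : set (n.-tuple R))
  (T : n.-tuple R -> Omega -> Omega) (f : n.-tuple R -> Omega -> R).
Hypotheses (oQ : topen Q) (DT : dynamical_system mu T) (fCL : C_closure_Linfty mu Q f).

Definition approximant k (z : n.-tuple R * Omega) : R :=
  f (rat_point (rat_index Q k z.1)) (T z.1 z.2).

Lemma measurable_approximant k : measurable_fun (Q `*` [set: Omega]) (approximant k).
Proof.
have [_ [_ [_ [_ mT]]]] := DT.
have -> : Q `*` [set: Omega] =
    \bigcup_j ([set x | Q x /\ rat_index Q k x = j] `*` [set: Omega]).
  apply/seteqP; split => [[x w] /= [Qx _]|[x w] [j _ /= [[Qx _] _]]] //.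
  by exists (rat_index Q k x).
apply/measurable_fun_bigcup => j.
  by apply: measurableX => //; exact: measurable_rat_index_eq.
have [Qj|nQj] := pselect (Q (rat_point j)).
  apply: (eq_measurable_fun (fun z => f (rat_point j) (T z.1 z.2))).
    by move=> [x w]; rewrite inE => -[[_ Hj] _]; rewrite /approximant /= Hj.
  apply: measurable_funS measurableT _ _ => //; apply: measurableT_comp mT.
  exact: (fCL.1 _ (sub_tclosure Qj)).1.
rewrite (_ : [set x | _] = set0); first by rewrite set0X; exact: measurable_fun_set0.
apply/seteqP; split => x // [Qx Hj]; apply: nQj.
by have [[Qp _] _] := rat_indexP oQ k Qx; rewrite -Hj.
Qed.

Lemma ae_approximant_cvg x : Q x ->
  \forall w \ae mu, (fun k => approximant k (x, w)) @ \oo --> f x (T x w).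
Proof.
move=> Qx; have Cx := sub_tclosure Qx.
pose p (k : nat) : n.-tuple R := rat_point (rat_index Q k x).
have Lp : \forall v \ae mu, forall k,
    ((`|f (p k) v - f x v|)%:E <= Linfty_dist mu (f (p k)) (f x))%E.
  by apply: ae_foralln => k; exact: ess_sup_ge.
apply: filterS (ae_comp_dynamical_system x DT Lp) => w Lpw.
apply/cvgrPdist_lt => e e0.
have [del d0 Hd] := fCL.2 x Cx _ (divr_gt0 e0 (ltr0Sn R 1)).
near=> k.
have [[Qpk Hpk] _] := rat_indexP oQ k Qx.
have kdel : k.+1%:R^-1 < del by near: k; exact: (near_infty_natSinv_lt (PosNum d0)).
have := Hd _ (sub_tclosure Qpk) (lt_trans Hpk kdel).
move=> /(le_trans (Lpw k)); rewrite lee_fin /approximant /= distrC => h.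
by apply: le_lt_trans h _; lra.
Unshelve. all: by end_near.
Qed.

End approximants.

Unset Implicit Arguments.
Theorem mainTheorem6 (R : realType) (d : measure_display) (Omega : measurableType d)
  (mu : probability Omega R) (N : nat) (Phi : R -> R) (Q : set (N.-tuple R))
  (T : N.-tuple R -> Omega -> Omega) (f : N.-tuple R -> Omega -> R) :
  young Phi -> topen Q -> tbounded Q -> dynamical_system mu T ->
  C_closure_Linfty mu Q f ->
  admissible Phi mu Q T f.
Proof.
move=> YPhi oQ bQ DT fCL.
have [C [C0 fC]] := C_closure_Linfty_bounded bQ fCL.
have mQ := topen_measurable oQ.
pose g z := clamp C (fine (limn_esup (fun k => (approximant Q T f k z)%:E))).
exists g; split.
  apply: (in_Orlicz_bounded (C := C)) => //.
  - exact: measurableX.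
  - exact: tbounded_measure_lty.
  - by apply: measurable_clamp_limn_esup => k; exact: measurable_approximant oQ DT fCL k.
  - by move=> z _; exact: normr_clamp_le (ltW C0).
apply: aeW => x Qx.
have fxC : \forall v \ae mu, `|f x v| <= C.
  apply: filterS (ess_sup_ge mu (fun w => (`|f x w|)%:E)) => v.
  by move/le_trans/(_ (fC x (sub_tclosure Qx))); rewrite lee_fin.
apply: filterS2 (ae_approximant_cvg oQ DT fCL Qx) (ae_comp_dynamical_system x DT fxC) => w cv bd.
have cvE : (fun k => (approximant Q T f k (x, w))%:E) @ \oo --> (f x (T x w))%:E.
  by apply: cvg_EFin; [exact: nearW|exact: cv].
rewrite /g (cvg_limn_einf_sup cvE).2.
exact: clamp_id.
Qed.
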